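(* An ES combination operator $\nabla$ satisfies (ESF1)–(ESF8) if and only if there exists a unique faithful assignment $\Phi\mapsto\succeq_\Phi$ such that $[\![B(\nabla(\Phi,E))]\!]=\max([\![B(E)]\!],\succeq_\Phi)$ for every profile $\Phi$ and every $E\in\mathcal E$.
   Context: Setting: an epistemic space $(\mathcal E,B,\mathcal L_{\mathcal P})$ ($\mathcal E$ nonempty, $B:\mathcal E\to\mathcal L_{\mathcal P}$ with image modulo equivalence exactly the consistent formulas over the finite variable set $\mathcal P$; $\mathcal W_{\mathcal P}$ valuations, $[\![\phi]\!]$ models); agents form a well-ordered set $\mathcal S$; a society is a nonempty finite $N\subseteq\mathcal S$; an $N$-profile is $\Phi:N\to\mathcal E$, $E_i=\Phi(i)$, identified with $E_i$ when $N=\{i\}$; profiles on $\{i_1<\dots<i_n\}$ and $\{j_1<\dots<j_m\}$ are equivalent ($\equiv$) if $n=m$ and entries coincide position-wise; $\Phi\upharpoonright_M$ restriction; partitions $\{N_1,N_2\}$ have nonempty disjoint parts. An ES combination operator maps (profile, $E$) to $\nabla(\Phi,E)\in\mathcal E$. Postulates: (ESF1) $B(\nabla(\Phi,E))\vdash B(E)$; (ESF2) if $\Phi\equiv\Phi'$ and $B(E)\equiv B(E')$ then $B(\nabla(\Phi,E))\equiv B(\nabla(\Phi',E'))$; (ESF3) if $B(E)\equiv B(E')\wedge B(E'')$ then $B(\nabla(\Phi,E'))\wedge B(E'')\vdash B(\nabla(\Phi,E))$; (ESF4) if moreover $B(\nabla(\Phi,E'))\wedge B(E'')\nvdash\bot$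 then $B(\nabla(\Phi,E))\vdash B(\nabla(\Phi,E'))\wedge B(E'')$; (ESF5) if $E_j\ne E_k$ ($j,k$ agents) there is $E'$ with $B(\nabla(E_j,E'))\not\equiv B(\nabla(E_k,E'))$; (ESF6) if $\bigwedge_{i\in N}B(E_i)\wedge B(E)\nvdash\bot$ then $B(\nabla(\Phi,E))\equiv\bigwedge_{i\in N}B(E_i)\wedge B(E)$; (ESF7) $B(\nabla(\Phi\upharpoonright_{N_1},E))\wedge B(\nabla(\Phi\upharpoonright_{N_2},E))\vdash B(\nabla(\Phi,E))$; (ESF8) if that conjunction is consistent then $B(\nabla(\Phi,E))\vdash B(\nabla(\Phi\upharpoonright_{N_1},E))\wedge B(\nabla(\Phi\upharpoonright_{N_2},E))$. An assignment maps each profile to a total preorder $\succeq_\Phi$ on $\mathcal W_{\mathcal P}$; it is basic if $\Phi\equiv\Psi$ implies $\succeq_\Phi=\succeq_\Psi$; it is faithful if basic and: (1) $E_j\ne E_k$ implies $\succeq_{E_j}\ne\succeq_{E_k}$; (2) if $\bigwedge_{i\in N}B(E_i)\nvdash\bot$ then $[\![\bigwedge_{i\in N}B(E_i)]\!]=\max(\succeq_\Phi)$; (3) $w\succeq_{\Phi\upharpoonright_{N_1}}w'$ and $w\succeq_{\Phi\upharpoonright_{N_2}}w'$ imply $w\succeq_\Phi w'$; (4) $w\succeq_{\Phi\upharpoonright_{N_1}}w'$ and $w\succ_{\Phi\upharpoonright_{N_2}}w'$ imply $w\succ_\Phi w'$. $\max(C,\succeq)=\{c\in C:c\succeq x\ \forall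 x\in C\}$. *)

From HB Require Import structures.
From mathcomp Require Import all_boot all_order.
Set Implicit Arguments. Unset Strict Implicit. Unset Printing Implicit Defensive.
Import Order.TTheory.

Inductive form (P : Type) : Type :=
  | Fvar of P
  | Ftop
  | Fbot
  | Fneg of form P
  | Fand of form P & form P
  | For of form P & form P
  | Fimp of form P & form P.
Arguments Ftop {P}. Arguments Fbot {P}.

Section Logic.
Variable P : finType.

Definition valuation := {ffun P -> bool}.

Fixpoint holds (w : valuation) (f : form P) : bool :=
  match f with
  | Fvar x => w x
  | Ftop => true
  | Fbot => false
  | Fneg g => ~~ holds w g
  | Fand g h => holds w g && holds w h
  | For g h => holds w g || holds w h
  | Fimp g h => holds w g ==> holds w h
  end.

Definition models (f : form P) : {set valuation} := [set w | holds w f].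
Definition entails (f g : form P) : Prop := models f \subset models g.
Definition lequiv (f g : form P) : Prop := entails f g /\ entails g f.
Definition consistent (f : form P) : Prop := ~ entails f Fbot.

Definition bigconj (s : seq (form P)) : form P := foldr (@Fand P) Ftop s.

Definition maxset (C : {set valuation}) (R : rel valuation) : {set valuation} :=
  [set c in C | [forall x in C, R c x]].

Definition strict (R : rel valuation) : rel valuation :=
  fun w w' => R w w' && ~~ R w' w.

Definition total_preorder (R : rel valuation) : Prop := total R /\ transitive R.
End Logic.

Definition epistemic_space (P : finType) (E : Type) (B : E -> form P) : Prop :=
  inhabited E /\
  (forall e, consistent (B e)) /\
  (forall f : form P, consistent f -> exists e, lequiv (B e) f).

Section Profiles.
Variables (d : Order.disp_t) (S : orderType d) (E : Type).

(* A profile Phi : N -> E, N a nonempty finite set of agents, is represented by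
   its graph, listed in increasing order of agents. *)
Definition agent_lt (a b : S * E) : bool := (a.1 < b.1)%O.

Record profile := Profile {
  graph : seq (S * E);
  graph_sorted : sorted agent_lt graph;
  graph_nonempty : (0 < size graph)%N }.

Definition society (Phi : profile) : seq S := map fst (graph Phi).
Definition entries (Phi : profile) : seq E := map snd (graph Phi).

Definition prof_equiv (Phi Psi : profile) : Prop := entries Phi = entries Psi.

(* the single-agent profile {i} -> e, identified with e *)
Definition single (i : S) (e : E) : profile :=
  @Profile [:: (i, e)] erefl erefl.

Lemma agent_lt_trans : transitive agent_lt.
Proof. by move=> b a c; rewrite /agent_lt; apply: lt_trans. Qed.

Lemma restrict_sorted (p : pred S) (Phi : profile) :
  sorted agent_lt (filter (fun a => p a.1) (graph Phi)).
Proof. exact: (sorted_filter agent_lt_trans _ (graph_sorted Phi)). Qed.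

Lemma restrict_nonempty (p : pred S) (Phi : profile) :
  has (fun a => p a.1) (graph Phi) ->
  (0 < size (filter (fun a => p a.1) (graph Phi)))%N.
Proof. by rewrite size_filter -has_count. Qed.

Definition restrict (Phi : profile) (p : pred S)
  (h : has (fun a => p a.1) (graph Phi)) : profile :=
  @Profile _ (restrict_sorted p Phi) (restrict_nonempty h).
Arguments restrict : clear implicits.
End Profiles.
Arguments restrict {d S E} Phi p h.

Section Postulates.
Variables (P : finType) (d : Order.disp_t) (S : orderType d) (E : Type)
  (B : E -> form P).
Variable nabla : profile S E -> E -> E.

Definition conjB (Phi : profile S E) : form P := bigconj (map B (entries Phi)).

Definition ESF1 := forall Phi e, entails (B (nabla Phi e)) (B e).
Definition ESF2 := forall Phi Phi' e e', prof_equiv Phi Phi' -> lequiv (B e) (B e') ->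
  lequiv (B (nabla Phi e)) (B (nabla Phi' e')).
Definition ESF3 := forall Phi e e' e'', lequiv (B e) (Fand (B e') (B e'')) ->
  entails (Fand (B (nabla Phi e')) (B e'')) (B (nabla Phi e)).
Definition ESF4 := forall Phi e e' e'', lequiv (B e) (Fand (B e') (B e'')) ->
  consistent (Fand (B (nabla Phi e')) (B e'')) ->
  entails (B (nabla Phi e)) (Fand (B (nabla Phi e')) (B e'')).
Definition ESF5 := forall (j k : S) (ej ek : E), ej <> ek ->
  exists e', ~ lequiv (B (nabla (single j ej) e')) (B (nabla (single k ek) e')).
Definition ESF6 := forall Phi e, consistent (Fand (conjB Phi) (B e)) ->
  lequiv (B (nabla Phi e)) (Fand (conjB Phi) (B e)).
(* partitions {N1, N2} of N: N1 = {i in N | p i}, N2 = {i in N | ~~ p i}, both nonempty *)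
Definition ESF7 := forall Phi e (p : pred S)
  (h1 : has (fun a => p a.1) (graph Phi)) (h2 : has (fun a => ~~ p a.1) (graph Phi)),
  entails (Fand (B (nabla (restrict Phi p h1) e)) (B (nabla (restrict Phi (fun x => ~~ p x) h2) e))) (B (nabla Phi e)).
Definition ESF8 := forall Phi e (p : pred S)
  (h1 : has (fun a => p a.1) (graph Phi)) (h2 : has (fun a => ~~ p a.1) (graph Phi)),
  consistent (Fand (B (nabla (restrict Phi p h1) e)) (B (nabla (restrict Phi (fun x => ~~ p x) h2) e))) ->
  entails (B (nabla Phi e)) (Fand (B (nabla (restrict Phi p h1) e)) (B (nabla (restrict Phi (fun x => ~~ p x) h2) e))).

Definition ESF_all := ESF1 /\ ESF2 /\ ESF3 /\ ESF4 /\ ESF5 /\ ESF6 /\ ESF7 /\ ESF8.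

Definition assignment := profile S E -> rel (valuation P).

Definition is_assignment (A : assignment) : Prop :=
  forall Phi, total_preorder (A Phi).

Definition basic (A : assignment) : Prop :=
  is_assignment A /\ forall Phi Psi, prof_equiv Phi Psi -> A Phi = A Psi.

Definition faithful (A : assignment) : Prop :=
  [/\ basic A,
      (forall (j k : S) (ej ek : E), ej <> ek -> A (single j ej) <> A (single k ek)),
      (forall Phi, consistent (conjB Phi) -> models (conjB Phi) = maxset setT (A Phi)),
      (forall Phi (p : pred S)
         (h1 : has (fun a => p a.1) (graph Phi)) (h2 : has (fun a => ~~ p a.1) (graph Phi))
         w w', A (restrict Phi p h1) w w' -> A (restrict Phi (fun x => ~~ p x) h2) w w' -> A Phi w w')
    & (forall Phi (p : pred S)
         (h1 : has (fun a => p a.1) (graph Phi)) (h2 : has (fun a => ~~ p a.1) (graph Phi))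
         w w', A (restrict Phi p h1) w w' -> strict (A (restrict Phi (fun x => ~~ p x) h2)) w w' ->
         strict (A Phi) w w')].

Definition represents (A : assignment) : Prop :=
  forall Phi e, models (B (nabla Phi e)) = maxset (models (B e)) (A Phi).
End Postulates.

(* Every nonempty set of valuations is the model set of some belief base, so an
   operator satisfying (ESF1)-(ESF8) induces a selection function X |-> [[B(nabla(Phi, E_X))]]
   on nonempty sets of valuations.  (ESF1), (ESF3) and (ESF4) are the classical rationality
   conditions (Arrow's axioms) that make this selection the choice function of the total
   preorder it reveals on pairs, w >= w' iff w is selected from {w, w'}; (ESF5)-(ESF8) then
   translate into the faithfulness conditions.  Conversely, selecting maximal elements of a
   faithful assignment satisfies the postulates, and an assignment is determined by its
   choices on pairs, which gives uniqueness. *)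
From Pilot Require Import Defs.
From HB Require Import structures.
From mathcomp Require Import all_boot all_order.
From Stdlib Require Import ClassicalEpsilon FunctionalExtensionality Classical.
Set Implicit Arguments. Unset Strict Implicit. Unset Printing Implicit Defensive.

Section Semantics.
Variable P : finType.
Implicit Types (f g : form P) (X : {set valuation P}).

Lemma models_and f g : models (Fand f g) = models f :&: models g.
Proof. by apply/setP => w; rewrite !inE. Qed.

Lemma models_bot : models (@Fbot P) = set0.
Proof. by apply/setP => w; rewrite !inE. Qed.

Lemma lequivP f g : lequiv f g <-> models f = models g.
Proof.
split => [[fg gf]|fg]; last by rewrite /lequiv /entails fg.
by apply/eqP; rewrite eqEsubset fg gf.
Qed.

Lemma consistentP f : consistent f <-> models f != set0.
Proof. by rewrite /consistent /entails models_bot subset0; split => /negP. Qed.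

Definition literal (w : valuation P) (x : P) : form P :=
  if w x then Fvar x else Fneg (Fvar x).

Definition char_form (w : valuation P) : form P :=
  bigconj [seq literal w x | x <- enum P].

Definition bigdisj (s : seq (form P)) : form P := foldr (@For P) Fbot s.

Definition form_of_set X : form P := bigdisj [seq char_form w | w <- enum X].

Lemma holds_bigconj v (s : seq (form P)) : holds v (bigconj s) = all (holds v) s.
Proof. by elim: s => //= f s ->. Qed.

Lemma holds_bigdisj v (s : seq (form P)) : holds v (bigdisj s) = has (holds v) s.
Proof. by elim: s => //= f s ->. Qed.

Lemma holds_char_form v w : holds v (char_form w) = (v == w).
Proof.
rewrite holds_bigconj all_map; apply/allP/eqP => [vw|->]; last first.
  by move=> x _ /=; rewrite /literal; case wx: (w x) => /=; rewrite wx.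
apply/ffunP => x; have := vw x; rewrite mem_enum /= /literal => /(_ isT).
by case: (w x) => /=; case: (v x).
Qed.

Lemma models_form_of_set X : models (form_of_set X) = X.
Proof.
apply/setP => v; rewrite inE holds_bigdisj has_map.
apply/hasP/idP => [[w wX /=]|vX]; first by rewrite holds_char_form => /eqP ->; rewrite -mem_enum.
by exists v; rewrite ?mem_enum //= holds_char_form.
Qed.

Lemma epistemic_space_models (E : Type) (B : E -> form P) :
  epistemic_space B -> forall X, X != set0 -> exists e, models (B e) = X.
Proof.
move=> [_ [_ realize]] X X0.
have /realize[e /lequivP eX] : consistent (form_of_set X).
  by apply/consistentP; rewrite models_form_of_set.
by exists e; rewrite eX models_form_of_set.
Qed.

End Semantics.

Lemma setI_neq0 (T : finType) (X Z : {set T}) :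
  X :&: Z != set0 -> X != set0 /\ Z != set0.
Proof. by case/set0Pn => x; rewrite inE => /andP[xX xZ]; split; apply/set0Pn; exists x. Qed.

Lemma set2_neq0 (T : finType) (x y : T) : [set x; y] != set0.
Proof. by apply/set0Pn; exists x; rewrite !inE eqxx. Qed.

Lemma setI_set2 (T : finType) (X : {set T}) x y :
  x \in X -> y \in X -> X :&: [set x; y] = [set x; y].
Proof. by move=> xX yX; apply/setIidPr/subsetP => z; rewrite !inE => /orP[] /eqP ->. Qed.

Section Maxset.
Variable P : finType.
Implicit Types (X Z : {set valuation P}) (R : rel (valuation P)).

Lemma maxset_set2 R w w' : total R -> R w w' = (w \in Defs.maxset [set w; w'] R).
Proof.
move=> totR; rewrite inE !inE eqxx /=.
have Rww : R w w by have := totR w w; rewrite orbb.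
apply/idP/forall_inP => [Rww' x|/(_ w')]; last by rewrite !inE eqxx orbT; apply.
by rewrite !inE => /orP[] /eqP ->.
Qed.

Lemma maxsetI_sub R X Z : Defs.maxset X R :&: Z \subset Defs.maxset (X :&: Z) R.
Proof.
apply/subsetP => w; rewrite !inE => /andP[/andP[wX /forall_inP wmax] wZ].
by rewrite wX wZ; apply/forall_inP => x; rewrite inE => /andP[xX _]; exact: wmax.
Qed.

Lemma maxsetI_sup R X Z : transitive R -> Defs.maxset X R :&: Z != set0 ->
  Defs.maxset (X :&: Z) R \subset Defs.maxset X R :&: Z.
Proof.
move=> trR /set0Pn [v]; rewrite !inE => /andP[/andP[vX /forall_inP vmax] vZ].
apply/subsetP => w; rewrite !inE => /andP[/andP[wX wZ] /forall_inP wmax].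
rewrite wX wZ andbT; apply/forall_inP => x xX.
by apply: (trR v) (vmax x xX); apply: wmax; rewrite inE vX.
Qed.

Lemma maxsetT_I R X : transitive R -> Defs.maxset setT R :&: X != set0 ->
  Defs.maxset X R = Defs.maxset setT R :&: X.
Proof.
move=> trR /set0Pn [v]; rewrite !inE => /andP[/forall_inP vmax vX].
apply/setP => w; rewrite !inE.
apply/andP/andP => [[wX /forall_inP wmax]|[/forall_inP wmax wX]]; split => //.
  by apply/forall_inP => x _; apply: (trR v) (vmax x _) => //; exact: wmax.
by apply/forall_inP => x _; exact: wmax.
Qed.

Lemma maxsetI_common R1 R2 R X :
  (forall w w', R1 w w' -> R2 w w' -> R w w') ->
  Defs.maxset X R1 :&: Defs.maxset X R2 \subset Defs.maxset X R.
Proof.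
move=> R12; apply/subsetP => w.
rewrite !inE => /andP[/andP[wX /forall_inP max1] /andP[_ /forall_inP max2]].
by rewrite wX; apply/forall_inP => x xX; apply: R12; [exact: max1|exact: max2].
Qed.

Lemma maxset_sub_common R1 R2 R X :
  total_preorder R1 -> total_preorder R2 ->
  (forall w w', R1 w w' -> strict R2 w w' -> strict R w w') ->
  (forall w w', R2 w w' -> strict R1 w w' -> strict R w w') ->
  Defs.maxset X R1 :&: Defs.maxset X R2 != set0 ->
  Defs.maxset X R \subset Defs.maxset X R1 :&: Defs.maxset X R2.
Proof.
move=> [tot1 tr1] [tot2 tr2] strict12 strict21 /set0Pn [v].
rewrite !inE => /andP[/andP[vX /forall_inP max1] /andP[_ /forall_inP max2]].
apply/subsetP => w; rewrite !inE => /andP[wX /forall_inP wmax].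
have Rwv : R w v := wmax v vX.
have not_strict_vw : ~~ strict R v w by rewrite /strict Rwv andbF.
rewrite wX /=; apply/andP; split; apply/forall_inP => x xX.
- case: (boolP (R1 w v)) => [R1wv|nR1wv]; first exact: (tr1 v) R1wv (max1 x xX).
  case/negP: not_strict_vw; apply: strict21; first exact: max2.
  by rewrite /strict nR1wv andbT; have := tot1 w v; rewrite (negbTE nR1wv).
- case: (boolP (R2 w v)) => [R2wv|nR2wv]; first exact: (tr2 v) R2wv (max2 x xX).
  case/negP: not_strict_vw; apply: strict12; first exact: max1.
  by rewrite /strict nR2wv andbT; have := tot2 w v; rewrite (negbTE nR2wv).
Qed.

End Maxset.

Section Rationalization.
Variables (P : finType) (sel : {set valuation P} -> {set valuation P}).
Implicit Types (X Z : {set valuation P}).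

Hypothesis sel_sub : forall X, X != set0 -> sel X \subset X.
Hypothesis sel_neq0 : forall X, X != set0 -> sel X != set0.
Hypothesis selI_sub : forall X Z, X :&: Z != set0 -> sel X :&: Z \subset sel (X :&: Z).
Hypothesis selI_sup : forall X Z, X :&: Z != set0 -> sel X :&: Z != set0 ->
  sel (X :&: Z) \subset sel X :&: Z.

Definition revealed : rel (valuation P) := fun w w' => w \in sel [set w; w'].

Lemma revealed_sel X w x : X != set0 -> w \in sel X -> x \in X -> revealed w x.
Proof.
move=> X0 wsel xX; have wX := subsetP (sel_sub X0) w wsel.
have := @selI_sub X [set w; x]; rewrite setI_set2 // => /(_ (set2_neq0 _ _)) /subsetP; apply.
by rewrite inE wsel !inE eqxx.
Qed.

Lemma sel_revealed X x y : X != set0 -> y \in sel X -> x \in X -> revealed x y -> x \in sel X.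
Proof.
move=> X0 ysel xX Rxy; have yX := subsetP (sel_sub X0) y ysel.
have selXxy : sel X :&: [set x; y] != set0.
  by apply/set0Pn; exists y; rewrite inE ysel !inE eqxx orbT.
have := @selI_sup X [set x; y]; rewrite setI_set2 // => /(_ (set2_neq0 _ _) selXxy).
by move/subsetP/(_ x Rxy); rewrite inE => /andP[].
Qed.

Lemma revealed_total : total revealed.
Proof.
move=> w w'; have /set0Pn [z zsel] := sel_neq0 (set2_neq0 w w').
have := subsetP (sel_sub (set2_neq0 w w')) z zsel.
rewrite !inE => /orP[] /eqP Ez; subst z; first by rewrite /revealed zsel.
by rewrite /revealed [[set w'; w]]setUC zsel orbT.
Qed.

Lemma revealed_trans : transitive revealed.
Proof.
move=> y x z Rxy Ryz; pose X := [set x; y; z].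
have X0 : X != set0 by apply/set0Pn; exists x; rewrite !inE eqxx.
have xX : x \in X by rewrite !inE eqxx.
have yX : y \in X by rewrite !inE eqxx orbT.
have zX : z \in X by rewrite !inE eqxx !orbT.
suff xsel : x \in sel X by exact: revealed_sel X0 xsel zX.
have /set0Pn [t tsel] := sel_neq0 X0.
have : t \in X := subsetP (sel_sub X0) t tsel.
rewrite !inE => /orP[/orP[]|] /eqP Et; subst t => //.
  exact: sel_revealed X0 tsel xX Rxy.
by apply: (sel_revealed X0 _ xX Rxy); exact: sel_revealed X0 tsel yX Ryz.
Qed.

Lemma sel_maxset X : X != set0 -> sel X = Defs.maxset X revealed.
Proof.
move=> X0; apply/setP => w; rewrite inE.
apply/idP/andP => [wsel|[wX /forall_inP wmax]].
  split; first exact: subsetP (sel_sub X0) w wsel.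
  by apply/forall_inP => x; exact: revealed_sel.
have /set0Pn [t tsel] := sel_neq0 X0.
exact: sel_revealed X0 tsel wX (wmax t (subsetP (sel_sub X0) t tsel)).
Qed.

End Rationalization.

Lemma profile_eq (d : Order.disp_t) (S : orderType d) (E : Type) (Phi Psi : profile S E) :
  graph Phi = graph Psi -> Phi = Psi.
Proof.
case: Phi Psi => g s n [g' s' n'] /= eg; subst g'.
by rewrite (bool_irrelevance s s') (bool_irrelevance n n').
Qed.

Lemma restrict_negbK (d : Order.disp_t) (S : orderType d) (E : Type)
    (Phi : profile S E) (p : pred S) h h' :
  restrict Phi (fun x => ~~ ~~ p x) h = restrict Phi p h'.
Proof. by apply: profile_eq => /=; apply: eq_filter => a; rewrite negbK. Qed.

Section Uniqueness.
Variables (P : finType) (d : Order.disp_t) (S : orderType d) (E : Type) (B : E -> form P).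
Variable nabla : profile S E -> E -> E.

Lemma represents_unique (A A' : assignment P S E) :
  epistemic_space B -> is_assignment A -> is_assignment A' ->
  represents B nabla A -> represents B nabla A' -> A = A'.
Proof.
move=> es tpA tpA' repA repA'.
apply: functional_extensionality => Phi; apply: functional_extensionality => w.
apply: functional_extensionality => w'.
have [e ew] := epistemic_space_models es (set2_neq0 w w').
rewrite (maxset_set2 _ _ (tpA Phi).1) (maxset_set2 _ _ (tpA' Phi).1).
by rewrite -ew -repA -repA'.
Qed.

End Uniqueness.

Section Soundness.
Variables (P : finType) (d : Order.disp_t) (S : orderType d) (E : Type) (B : E -> form P).
Variables (nabla : profile S E -> E -> E) (A : assignment P S E).
Hypothesis es : epistemic_space B.
Hypothesis tpA : is_assignment A.
Hypothesis repA : represents B nabla A.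

Lemma represents_ESF5 :
  (forall (j k : S) (ej ek : E), ej <> ek -> A (single j ej) <> A (single k ek)) ->
  ESF5 B nabla.
Proof.
move=> A_inj j k ej ek ejk; apply: NNPP => same; apply: (A_inj j k ej ek ejk).
apply: functional_extensionality => w; apply: functional_extensionality => w'.
have [e ew] := epistemic_space_models es (set2_neq0 w w').
rewrite (maxset_set2 _ _ (tpA _).1) (maxset_set2 _ _ (tpA (single k ek)).1) -ew -!repA.
suff /lequivP -> : lequiv (B (nabla (single j ej) e)) (B (nabla (single k ek) e)) by [].
by apply: NNPP => neq; apply: same; exists e.
Qed.

Lemma represents_ESF6 :
  (forall Phi, consistent (conjB B Phi) -> models (conjB B Phi) = Defs.maxset setT (A Phi)) ->
  ESF6 B nabla.
Proof.
move=> A_max Phi e /consistentP cons; apply/lequivP; rewrite repA models_and.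
have conj_cons : consistent (conjB B Phi).
  by apply/consistentP; apply: contraNneq cons; rewrite models_and => ->; rewrite set0I.
by rewrite (A_max _ conj_cons) (maxsetT_I (tpA Phi).2) // -(A_max _ conj_cons) -models_and.
Qed.

Lemma represents_ESF_all : faithful B A -> ESF_all B nabla.
Proof.
case=> [[_ basA] A_inj A_max A_pareto A_strict].
split; [|split; [|split; [|split; [|split; [|split; [|split]]]]]].
- move=> Phi e; rewrite /entails repA; apply/subsetP => w; by rewrite inE => /andP[].
- by move=> Phi Phi' e e' PhiPhi' /lequivP ee'; apply/lequivP; rewrite !repA (basA _ _ PhiPhi') ee'.
- move=> Phi e e' e'' /lequivP ee'; rewrite /entails models_and !repA ee' models_and.
  exact: maxsetI_sub.
- move=> Phi e e' e'' /lequivP ee' /consistentP; rewrite /entails !models_and !repA ee' models_and.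
  exact: maxsetI_sup (tpA Phi).2.
- exact: represents_ESF5.
- exact: represents_ESF6.
- by move=> Phi e p h1 h2; rewrite /entails models_and !repA; apply: maxsetI_common; exact: A_pareto.
- move=> Phi e p h1 h2 /consistentP; rewrite /entails !models_and !repA.
  apply: maxset_sub_common => //; first exact: A_strict.
  move=> w w'; have h1' : has (fun a => ~~ ~~ p a.1) (graph Phi).
    by apply: sub_has h1 => a; rewrite negbK.
  by rewrite -(restrict_negbK h1' h1); exact: A_strict.
Qed.

End Soundness.

Section Completeness.
Variables (P : finType) (d : Order.disp_t) (S : orderType d) (E : Type) (B : E -> form P).
Variable nabla : profile S E -> E -> E.
Hypothesis es : epistemic_space B.
(* Keep the postulates' quantified arguments explicit, as in their definitions. *)
Local Unset Implicit Arguments.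
Hypotheses (H1 : ESF1 B nabla) (H2 : ESF2 B nabla) (H3 : ESF3 B nabla) (H4 : ESF4 B nabla).
Hypotheses (H5 : ESF5 B nabla) (H6 : ESF6 B nabla) (H7 : ESF7 B nabla) (H8 : ESF8 B nabla).
Local Set Implicit Arguments.
Implicit Types (X Z : {set valuation P}) (Phi : profile S E).

(* An arbitrary belief state with model set X (meaningful only for nonempty X). *)
Definition state_of X : E := epsilon (proj1 es) (fun e => models (B e) = X).

Definition sel_nabla Phi X := models (B (nabla Phi (state_of X))).

Definition revealed_assignment : assignment P S E :=
  fun Phi => revealed (sel_nabla Phi).

Lemma models_state_of X : X != set0 -> models (B (state_of X)) = X.
Proof.
move=> X0; apply: (epsilon_spec (proj1 es) (fun e => models (B e) = X)).
exact: epistemic_space_models.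
Qed.

Lemma models_nabla Phi e : models (B (nabla Phi e)) = sel_nabla Phi (models (B e)).
Proof.
apply/lequivP/H2 => //; apply/lequivP; rewrite models_state_of //.
by apply/consistentP; case: es => _ [].
Qed.

Lemma sel_nabla_maxset Phi :
  total_preorder (revealed_assignment Phi) /\
  forall X, X != set0 -> sel_nabla Phi X = Defs.maxset X (revealed_assignment Phi).
Proof.
have sel_sub X : X != set0 -> sel_nabla Phi X \subset X.
  by move=> X0; rewrite /sel_nabla -{2}(models_state_of X0); exact: H1.
have sel_neq0 X : X != set0 -> sel_nabla Phi X != set0.
  by move=> _; apply/consistentP; case: es => _ [].
have stateI X Z : X :&: Z != set0 ->
    lequiv (B (state_of (X :&: Z))) (Fand (B (state_of X)) (B (state_of Z))).
  by move=> XZ; have [X0 Z0] := setI_neq0 XZ; apply/lequivP; rewrite models_and !models_state_of.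
have selI_sub X Z : X :&: Z != set0 ->
    sel_nabla Phi X :&: Z \subset sel_nabla Phi (X :&: Z).
  move=> XZ; have [_ Z0] := setI_neq0 XZ.
  by have := H3 Phi _ _ _ (stateI X Z XZ); rewrite /entails models_and models_state_of.
have selI_sup X Z : X :&: Z != set0 -> sel_nabla Phi X :&: Z != set0 ->
    sel_nabla Phi (X :&: Z) \subset sel_nabla Phi X :&: Z.
  move=> XZ selXZ; have [_ Z0] := setI_neq0 XZ.
  have := H4 Phi _ _ _ (stateI X Z XZ); rewrite /entails models_and models_state_of //; apply.
  by apply/consistentP; rewrite models_and models_state_of.
split; first split.
- exact: revealed_total sel_sub sel_neq0.
- exact: revealed_trans sel_sub sel_neq0 selI_sub selI_sup.
- exact: sel_maxset sel_sub sel_neq0 selI_sub selI_sup.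
Qed.

Lemma revealed_represents : represents B nabla revealed_assignment.
Proof.
move=> Phi e; rewrite models_nabla (sel_nabla_maxset Phi).2 //.
by apply/consistentP; case: es => _ [].
Qed.

Lemma revealed_pareto Phi (p : pred S) h1 h2 w w' :
  revealed_assignment (restrict Phi p h1) w w' ->
  revealed_assignment (restrict Phi (fun x => ~~ p x) h2) w w' ->
  revealed_assignment Phi w w'.
Proof.
move=> R1 R2; apply: (subsetP (H7 Phi (state_of [set w; w']) p h1 h2)).
by rewrite models_and inE; apply/andP.
Qed.

Lemma revealed_strict Phi (p : pred S) h1 h2 w w' :
  revealed_assignment (restrict Phi p h1) w w' ->
  strict (revealed_assignment (restrict Phi (fun x => ~~ p x) h2)) w w' ->
  strict (revealed_assignment Phi) w w'.
Proof.
move=> R1 /andP[R2 nR2]; rewrite /strict (revealed_pareto R1 R2) /=.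
apply: contra nR2; rewrite /revealed_assignment /revealed [[set w'; w]]setUC => R'.
have cons : consistent (Fand (B (nabla (restrict Phi p h1) (state_of [set w; w'])))
    (B (nabla (restrict Phi (fun x => ~~ p x) h2) (state_of [set w; w'])))).
  by apply/consistentP/set0Pn; exists w; rewrite models_and inE; apply/andP.
by have := subsetP (H8 Phi _ p h1 h2 cons) w' R'; rewrite models_and inE => /andP[].
Qed.

Lemma revealed_faithful : faithful B revealed_assignment.
Proof.
split.
- split=> [Phi|Phi Psi PhiPsi]; first exact: (sel_nabla_maxset Phi).1.
  have sel_eq X : sel_nabla Phi X = sel_nabla Psi X by apply/lequivP/H2 => //; apply/lequivP.
  apply: functional_extensionality => w; apply: functional_extensionality => w'.
  by rewrite /revealed_assignment /revealed sel_eq.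
- move=> j k ej ek ejk Ajk; have [e' neq] := H5 j k ej ek ejk.
  by apply: neq; apply/lequivP; rewrite !revealed_represents Ajk.
- move=> Phi cons; have T0 : [set: valuation P] != set0.
    by apply/set0Pn; exists [ffun=> true]; rewrite inE.
  have consT : consistent (Fand (conjB B Phi) (B (state_of setT))).
    by apply/consistentP; rewrite models_and models_state_of // setIT; apply/consistentP.
  have /lequivP := H6 Phi _ consT.
  by rewrite revealed_represents models_and models_state_of // setIT => ->.
- exact: revealed_pareto.
- exact: revealed_strict.
Qed.

End Completeness.

Theorem theorem2 (P : finType) (d : Order.disp_t) (S : orderType d)
  (E : Type) (B : E -> form P) (nabla : profile S E -> E -> E) :
  epistemic_space B ->
  well_founded (fun x y : S => (x < y)%O) ->
  ESF_all B nabla <->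
  exists! A : assignment P S E, faithful B A /\ represents B nabla A.
Proof.
move=> es _; split.
- move=> [H1 [H2 [H3 [H4 [H5 [H6 [H7 H8]]]]]]].
  have faithfulR := revealed_faithful es H1 H2 H3 H4 H5 H6 H7 H8.
  have representsR := revealed_represents es H1 H2 H3 H4.
  exists (revealed_assignment nabla es); split=> // A' [[[tpA' _] _ _ _ _] repA'].
  by case: faithfulR => [[tpR _] _ _ _ _]; exact: represents_unique repA'.
- move=> [A [[fA repA] _]].
  by case: (fA) => [[tpA _] _ _ _ _]; exact: represents_ESF_all fA.
Qed.
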